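(* Let $A=\{a_1,\ldots,a_n\}$ and $B=\{b_1,\ldots,b_m\}$ be finite point sets in $\mathbb{R}^2$ with $m\le n$. Let $t\in\mathbb{R}^2$ be such that $\|b_p+t-a_r\|\neq\|b_p+t-a_s\|$ for all $p\in\{1,\ldots,m\}$ and all $r\neq s$ in $\{1,\ldots,n\}$. Then every optimal matching for $t$ is an efficient matching for the set of preference lists $L=\{L_t(b_i)\mid i\in\{1,\ldots,m\}\}$.
   Context: A matching is an injective map $\pi:B\to A$; its cost at translation $t$ is $f(\pi,t)=\sum_{b\in B}\|b+t-\pi(b)\|^2$, and $\pi$ is optimal for $t$ if it minimizes $f(\cdot,t)$ over all injective maps. The preference list $L_t(b)$ of $b\in B$ is the list of the points of $A$ sorted by increasing distance from $b+t$. A matching $\pi$ is better than a distinct matching $\sigma$ if for each $b\in B$ either $\pi(b)=\sigma(b)$ or $\pi(b)$ appears before $\sigma(b)$ in $L_t(b)$. A matching is efficient (Pareto efficient) if no matching is better than it. *)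

From mathcomp Require Import all_boot all_order all_algebra.
Set Implicit Arguments. Unset Strict Implicit. Unset Printing Implicit Defensive.
Import Order.TTheory GRing.Theory Num.Theory.
Local Open Scope ring_scope.

Section Defs.
Variable R : rcfType.
Definition pt := (R * R)%type.
Definition addp (x y : pt) : pt := (x.1 + y.1, x.2 + y.2).
Definition subp (x y : pt) : pt := (x.1 - y.1, x.2 - y.2).
Definition sqnorm (x : pt) : R := x.1 ^+ 2 + x.2 ^+ 2.
Definition norm2 (x : pt) : R := Num.sqrt (sqnorm x).

Variables (n m : nat) (A : 'I_n -> pt) (B : 'I_m -> pt).

Definition matching (pi : 'I_m -> 'I_n) : Prop := injective pi.

Definition cost (pi : 'I_m -> 'I_n) (t : pt) : R :=
  \sum_(p < m) norm2 (subp (addp (B p) t) (A (pi p))) ^+ 2.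

Definition optimal (pi : 'I_m -> 'I_n) (t : pt) : Prop :=
  matching pi /\ forall sigma, matching sigma -> cost pi t <= cost sigma t.

Definition dist (t : pt) (p : 'I_m) (r : 'I_n) : R :=
  norm2 (subp (addp (B p) t) (A r)).

Definition pref_list (t : pt) (p : 'I_m) : seq 'I_n :=
  sort (fun r s => dist t p r <= dist t p s) (enum 'I_n).

Definition before (t : pt) (p : 'I_m) (r s : 'I_n) : bool :=
  (index r (pref_list t p) < index s (pref_list t p))%N.

Definition better (t : pt) (pi sigma : 'I_m -> 'I_n) : Prop :=
  matching pi /\ matching sigma /\ (exists p, pi p <> sigma p) /\
  forall p, pi p = sigma p \/ before t p (pi p) (sigma p).

Definition efficient (t : pt) (pi : 'I_m -> 'I_n) : Prop :=
  matching pi /\ ~ exists sigma, better t sigma pi.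
End Defs.

From mathcomp Require Import all_boot all_order all_algebra.
Import Order.TTheory GRing.Theory Num.Theory.
Local Open Scope ring_scope.

(* A matching that is better for the preference lists moves every point of B
   to an A-point that is no farther, and, as distances are pairwise distinct,
   at least one point strictly closer.  Each summand of the cost therefore
   weakly decreases and one strictly, contradicting optimality. *)

Lemma ler_lt_sum {R : numDomainType} {I : finType} {F G : I -> R} (i0 : I) :
  (forall i, F i <= G i) -> F i0 < G i0 -> \sum_i F i < \sum_i G i.
Proof.
move=> leFG ltFG0; rewrite [ltLHS](bigD1 i0) // [ltRHS](bigD1 i0) //=.
by rewrite ltr_leD // ler_sum.
Qed.

Section Preferences.
Context {R : rcfType} {n m : nat} {A : 'I_n -> pt R} {B : 'I_m -> pt R} {t : pt R}.

Lemma before_dist_le p r s :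
  before A B t p r s -> dist A B t p r <= dist A B t p s.
Proof.
have in_pref x : x \in pref_list A B t p by rewrite mem_sort mem_enum.
have le_trans_dist : transitive (fun r s => dist A B t p r <= dist A B t p s).
  by move=> y x z; apply: le_trans.
have := sort_sorted (fun x y => le_total (dist A B t p x) (dist A B t p y)).
move/(_ (enum 'I_n))/(sorted_ltn_index le_trans_dist) => sorted_dist.
exact: sorted_dist (in_pref r) (in_pref s).
Qed.

Lemma dist_ge0 p r : 0 <= dist A B t p r.
Proof. exact: sqrtr_ge0. Qed.

Lemma before_dist_sqr_le p r s :
  before A B t p r s -> dist A B t p r ^+ 2 <= dist A B t p s ^+ 2.
Proof.
move=> before_rs; rewrite lerXn2r ?nnegrE ?dist_ge0 //.
exact: before_dist_le.
Qed.

Hypothesis dist_inj :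
  forall (p : 'I_m) (r s : 'I_n), r != s -> dist A B t p r != dist A B t p s.

Lemma better_cost_lt {sigma pi : 'I_m -> 'I_n} :
  better A B t sigma pi -> cost A B sigma t < cost A B pi t.
Proof.
case=> _ [_ [[p0 neq_p0] sigma_pref]].
apply: (ler_lt_sum p0) => [p|].
  by case: (sigma_pref p) => [->|]; last exact: before_dist_sqr_le.
case: (sigma_pref p0) => // before_p0.
rewrite ltrXn2r ?nnegrE ?dist_ge0 // lt_neqAle before_dist_le // andbT.
by apply: dist_inj; apply/eqP.
Qed.

End Preferences.

Theorem lemma5 (R : rcfType) (n m : nat) (A : 'I_n -> pt R) (B : 'I_m -> pt R)
  (hA : injective A) (hB : injective B) (hmn : (m <= n)%N) (t : pt R)
  (hgen : forall (p : 'I_m) (r s : 'I_n), r != s -> dist A B t p r != dist A B t p s) :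
  forall pi : 'I_m -> 'I_n, optimal A B pi t -> efficient A B t pi.
Proof.
move=> pi [match_pi pi_opt]; split=> // -[sigma sigma_better].
have := pi_opt sigma sigma_better.1.
by rewrite leNgt (better_cost_lt hgen sigma_better).
Qed.
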